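(* Let $h:\mathbb{R}\to[0,+\infty)$ be a continuous super-multiplicative function (i.e. $h(xy)\ge h(x)h(y)$ for all $x,y\in\mathbb{R}$) such that $h(t)\ge t$ for all $t$. Let $f:(a,b)\to\mathbb{R}$ be a Lebesgue measurable function which is $h$-mid-convex, i.e. $$f\Big(\frac{x+y}{2}\Big)\le h\Big(\frac12\Big)\big(f(x)+f(y)\big)\quad\text{for all } x,y\in(a,b).$$ Then $f$ is continuous on $(a,b)$. *)

From HB Require Import structures.
From mathcomp Require Import all_boot all_order all_algebra.
From mathcomp Require Import all_classical all_reals all_analysis.
Set Implicit Arguments. Unset Strict Implicit. Unset Printing Implicit Defensive.
Import Order.TTheory GRing.Theory Num.Theory.
Import numFieldNormedType.Exports.
Local Open Scope classical_set_scope.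
Local Open Scope ring_scope.

(* The real line equipped with the Lebesgue (i.e. completed, Caratheodory)
   sigma-algebra: the domain type of MathComp-Analysis' completed Lebesgue
   measure. Its carrier is (convertibly) R. *)
Definition lebesgue_line (R : realType) : measurableType _ :=
  caratheodory_type (wlength (R:=R) idfun)^*%mu.

Definition lebesgue_measurable_on (R : realType) (D : set R) (f : R -> R) :=
  @measurable_fun _ _ (lebesgue_line R) R (D : set (lebesgue_line R))
    (f : lebesgue_line R -> R).

Definition h_midconvex (R : realType) (h : R -> R) (a b : R) (f : R -> R) :=
  forall x y, x \in `]a, b[ -> y \in `]a, b[ ->
    f ((x + y) / 2) <= h (2^-1) * (f x + f y).

From HB Require Import structures.
From mathcomp Require Import all_boot all_order all_algebra.
From mathcomp Require Import all_classical all_reals all_analysis.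
From mathcomp Require Import measurable_realfun lra ring.
Set Implicit Arguments. Unset Strict Implicit. Unset Printing Implicit Defensive.
Import Order.TTheory GRing.Theory Num.Theory.
Import numFieldNormedType.Exports.
Local Open Scope classical_set_scope.
Local Open Scope ring_scope.

(* Since h t * h t^-1 <= h 1 = 1 and h >= id, super-multiplicativity forces
   h t = t for t > 0; in particular h (1/2) = 1/2 and f is midconvex in
   Jensen's sense.
   Sierpinski: the sets [a, b] `&` [f > n] shrink to the empty set, so one of
   them has measure < d.  If f y > n, midconvexity puts z or its mirror image
   2y - z into [f > n] for every z in [y - d, y + d]; as reflection preserves
   outer measure, this interval of length 2d would have measure < 2d.  Hence
   f <= n near x0.
   Bernstein-Doetsch: if f <= M on [x0 - d, x0 + d], iterating the midpoint
   inequality gives |f (x0 + s) - f x0| <= 2^-n (M - f x0) for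
   |s| <= 2^-n d. *)

Lemma supermul_ge_id_pos (R : realFieldType) (h : R -> R) :
  (forall x y, h x * h y <= h (x * y)) -> (forall t, t <= h t) ->
  forall t, 0 < t -> h t = t.
Proof.
move=> h_supermul h_ge_id.
have h1 : h 1 = 1.
  by have := h_supermul 1 1; have := h_ge_id 1; rewrite mulr1; nra.
have le_inv t : 0 < t -> h t^-1 <= t^-1.
  move=> t_gt0; have := h_supermul t t^-1; rewrite mulfV ?lt0r_neq0 // h1.
  have := mulfV (lt0r_neq0 t_gt0); have : 0 < t^-1 by rewrite invr_gt0.
  have := h_ge_id t; have := h_ge_id t^-1; set s := t^-1; nra.
move=> t t_gt0; apply/eqP; rewrite eq_le h_ge_id andbT.
by rewrite -[t in h t]invrK -[leRHS]invrK le_inv ?invr_gt0.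
Qed.

Definition midconvex_on (R : realFieldType) (D : set R) (f : R -> R) :=
  forall u v, D u -> D v -> f ((u + v) / 2) <= 2^-1 * (f u + f v).

Section midconvex_bounded_above.
Variables (R : realType) (f : R -> R) (x0 d M : R).
Hypothesis d_gt0 : 0 < d.
Hypothesis f_midconvex : midconvex_on [set y | `|y - x0| <= d] f.
Hypothesis f_le_M : forall y, `|y - x0| <= d -> f y <= M.

Let in_ball s : `|s| <= d -> `|x0 + s - x0| <= d.
Proof. by rewrite addrAC subrr add0r. Qed.

Let exp_half_le1 n : 2^-n <= 1 :> R.
Proof. by rewrite invf_le1 ?exprn_gt0 ?exprn_ege1 ?ler1n. Qed.

Lemma midconvex_increment_le n s :
  `|s| <= d * 2^-n -> f (x0 + s) - f x0 <= (M - f x0) * 2^-n.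
Proof.
elim: n s => [|n IHn] s; rewrite ?expr0 ?invr1 ?mulr1.
  by move=> /in_ball /f_le_M; lra.
rewrite exprSr invfM mulrA => s_small.
have d_shrink : d * 2^-n <= d by rewrite ler_piMr ?(ltW d_gt0) ?exp_half_le1.
have ss_small : `|s + s| <= d * 2^-n by rewrite (le_trans (ler_normD _ _)) //; lra.
have := f_midconvex (u:=x0) (v:=x0 + (s + s)).
rewrite /= subrr normr0 (ltW d_gt0) in_ball ?(le_trans ss_small d_shrink) // => /(_ isT isT).
have -> : (x0 + (x0 + (s + s))) / 2 = x0 + s by field.
by have := IHn _ ss_small; lra.
Qed.

Lemma midconvex_increment_norm_le n s :
  `|s| <= d * 2^-n -> `|f (x0 + s) - f x0| <= (M - f x0) * 2^-n.
Proof.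
move=> s_small; rewrite ler_norml midconvex_increment_le // andbT.
have s_in : `|s| <= d by rewrite (le_trans s_small) // ler_piMr ?(ltW d_gt0).
have := f_midconvex (u:=x0 + s) (v:=x0 - s).
rewrite /= !in_ball ?normrN // => /(_ isT isT).
have -> : (x0 + s + (x0 - s)) / 2 = x0 by field.
by have := midconvex_increment_le (s:=- s); rewrite normrN => /(_ n s_small); lra.
Qed.

Lemma midconvex_bounded_above_continuous : {for x0, continuous f}.
Proof.
apply/cvgrPdist_le => e e_gt0.
have C_ge0 : 0 <= M - f x0 by rewrite subr_ge0 f_le_M // subrr normr0 ltW.
pose N := Num.bound ((M - f x0) / e).
have C_small : (M - f x0) * 2^-N < e.
  rewrite ltr_pdivrMr ?exprn_gt0 // -ltr_pdivrMl // mulrC.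
  apply: (lt_trans (archi_boundP _)); first by rewrite divr_ge0 // ltW.
  by rewrite -natrX ltr_nat ltn_expl.
apply/nbhs_ballP; exists (d * 2^-N); first by rewrite /= mulr_gt0 ?invr_gt0 ?exprn_gt0.
move=> y; rewrite /ball /= distrC => /ltW /midconvex_increment_norm_le.
by rewrite subrKC distrC; lra.
Qed.

End midconvex_bounded_above.

Section lebesgue_outer_measure.
Context {R : realType}.
Local Notation l := (@wlength R idfun).

Lemma lebesgue_outer_itv_cc (u v : R) : u <= v -> (l^* `[u, v]%classic)%mu = (v - u)%:E.
Proof.
move=> uv; have := lebesgue_measure_itv `[u, v]; rewrite /= lte_fin.
have -> : (l^* `[u, v]%classic)%mu = lebesgue_measure `[u, v]%classic by [].
by move=> ->; case: ltgtP uv => // -> _; rewrite subrr.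
Qed.

Lemma lebesgue_outer_reflect_le (c : R) (A : set R) :
  ((l^* [set y | A (c - y)%R])%mu <= (l^* A)%mu)%E.
Proof.
(* Pull back every open-interval cover of A along y |-> c - y. *)
rewrite !outer_measure_open_itv_cover.
apply: le_ereal_inf_tmp => _ [F [F_itv A_cover] <-].
pose G k := [set y | F k (c - y)].
pose I k := sval (cid (F_itv k)).
have GE k : G k = `](c - (I k).2), (c - (I k).1)[%classic.
  rewrite /G /I; case: cid => -[u v] /= ->; apply/seteqP.
  by split => y /=; rewrite !in_itv /= => /andP[? ?]; apply/andP; split; lra.
apply: ereal_inf_lbound; exists G.
  split; first by move=> k; exists (c - (I k).2, c - (I k).1).
  by move=> y /= /A_cover[k _ Fk]; exists k.
apply: eq_eseriesr => k _; rewrite GE /I; case: cid => -[u v] /= ->.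
rewrite !wlength_itv /= !lte_fin ltrD2l ltrN2.
by rewrite -!EFinD opprB addrC addrA subrK.
Qed.

Lemma midconvex_le_of_superlevel_small (D K : set R) (f : R -> R) (y d M : R) :
  midconvex_on D f -> `[y - d, y + d] `<=` K `&` D ->
  ((l^* (K `&` (D `&` f @^-1` `]M, +oo[)))%mu < d%:E)%E -> f y <= M.
Proof.
set A := K `&` (D `&` _) => f_midconvex sub_KD A_small.
rewrite leNgt; apply/negP => M_lt_fy.
have d_gt0 : 0 < d by rewrite -lte_fin (le_lt_trans (outer_measure_ge0 _ _) A_small).
have cover : `[y - d, y + d] `<=` A `|` [set z | A (y + y - z)].
  move=> z z_near; have z'_near : `[y - d, y + d]%classic (y + y - z).
    by move: z_near; rewrite /= !in_itv /= => /andP[? ?]; apply/andP; split; lra.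
  have [Kz Dz] := sub_KD _ z_near; have [Kz' Dz'] := sub_KD _ z'_near.
  have := f_midconvex _ _ Dz Dz'.
  have -> : (z + (y + y - z)) / 2 = y by field.
  rewrite /A /= !in_itv /= !andbT.
  by case: (ltP M (f z)) => fz; [left | right; split => //; split => //; lra].
have : ((l^* `[(y - d)%R, (y + d)%R]%classic)%mu
         <= (l^* (A `|` [set z | A (y + y - z)%R]))%mu)%E.
  exact: le_outer_measure.
rewrite lebesgue_outer_itv_cc; last by lra.
move/le_trans => /(_ _ (outer_measureU2 _ _ _)).
move/le_trans => /(_ _ (leeD2l _ (lebesgue_outer_reflect_le (y + y) A))).
by move/le_lt_trans => /(_ _ (lteD A_small A_small)); rewrite -EFinD lte_fin; lra.
Qed.

Lemma lebesgue_superlevel_small (D : set R) (f : R -> R) (u v e : R) :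
  measurable (D : set (lebesgue_line R)) -> lebesgue_measurable_on D f -> 0 < e ->
  exists n : nat, ((l^* (`[u, v] `&` (D `&` f @^-1` `]n%:R, +oo[)))%mu < e%:E)%E.
Proof.
move=> mD mf e_gt0.
pose A n := `[u, v]%classic `&` (D `&` f @^-1` `]n%:R, +oo[).
have mA n : measurable (A n : set (lebesgue_line R)).
  apply: measurableI; first by apply: sub_caratheodory; exact: measurable_itv.
  exact: mf (measurable_itv _).
have A0_fin : (completed_lebesgue_measure (A 0%N) < +oo)%E.
  apply: (le_lt_trans (le_outer_measure _ _ _ (@subIsetl _ _ _))).
  exact (compact_finite_measure (@segment_compact _ u v)).
have A_decr : nonincreasing_seq A.
  move=> m n mn; apply/subsetPset => y [uvy [Dy]]; rewrite /= !in_itv /= !andbT.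
  move=> fy; split => //; split => //=.
  by rewrite in_itv /= andbT (le_lt_trans _ fy) ?ler_nat.
have A_cap : \bigcap_n A n = set0.
  apply/seteqP; split => // y /(_ (Num.bound `|f y|) I) [_ [_ /=]].
  rewrite in_itv /= andbT => fy_big.
  by have := archi_boundP (normr_ge0 (f y)); have := ler_norm (f y); lra.
have := nonincreasing_cvg_mu A0_fin mA (bigcapT_measurable mA) A_decr.
rewrite A_cap measure0 => /fine_cvgP[A_fin /cvgr_lt-/(_ _ e_gt0) A_lt].
have [n _ /(_ n (leqnn n))[/= fin]] := filterI A_fin A_lt.
by rewrite -lte_fin fineK // => A_lt_e; exists n.
Qed.

End lebesgue_outer_measure.

Lemma midconvex_locally_bounded_above (R : realType) (a b x0 : R) (f : R -> R) :
  lebesgue_measurable_on `]a, b[ f -> midconvex_on `]a, b[ f -> x0 \in `]a, b[ ->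
  exists d, [/\ 0 < d, [set y | `|y - x0| <= d] `<=` `]a, b[ &
    exists M, forall y, `|y - x0| <= d -> f y <= M].
Proof.
move=> mf f_midconvex; rewrite in_itv /= => /andP[a_x0 x0_b].
pose d := Num.min (x0 - a) (b - x0) / 4.
have d_gt0 : 0 < d by rewrite divr_gt0 // lt_min !subr_gt0 a_x0 x0_b.
have [d_a d_b] : 4 * d <= x0 - a /\ 4 * d <= b - x0.
  by rewrite mulrC divfK ?pnatr_eq0 // !ge_min !lexx orbT.
have near_in y : `|y - x0| <= 2 * d -> `]a, b[%classic y.
  by rewrite ler_norml /= in_itv /= => /andP[? ?]; apply/andP; split; lra.
have mD : measurable (`]a, b[%classic : set (lebesgue_line R)).
  by apply: sub_caratheodory; exact: measurable_itv.
have [n superlevel_small] := lebesgue_superlevel_small a b mD mf d_gt0.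
exists d; split => //; first by move=> y /= y_near; apply: near_in; lra.
exists n%:R => y; rewrite ler_norml => /andP[? ?].
apply: midconvex_le_of_superlevel_small f_midconvex _ superlevel_small.
move=> z /=; rewrite in_itv /= => /andP[? ?]; split.
  by rewrite /= in_itv /=; apply/andP; split; lra.
by apply: near_in; rewrite ler_norml; apply/andP; split; lra.
Qed.

Theorem theorem3p3 (R : realType) (h : R -> R) (a b : R) (f : R -> R) :
  continuous h ->
  (forall x, 0 <= h x) ->
  (forall x y, h x * h y <= h (x * y)) ->
  (forall t, t <= h t) ->
  lebesgue_measurable_on `]a, b[ f ->
  h_midconvex h a b f ->
  forall x, x \in `]a, b[ -> {for x, continuous f}.
Proof.
move=> _ _ h_supermul h_ge_id mf h_midconvex_f x x_in.
have f_midconvex : midconvex_on `]a, b[ f.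
  move=> u v Du Dv; have := h_midconvex_f u v Du Dv.
  by rewrite (supermul_ge_id_pos h_supermul h_ge_id) ?invr_gt0.
have [d [d_gt0 ball_sub [M f_le_M]]] :=
  midconvex_locally_bounded_above mf f_midconvex x_in.
apply: (midconvex_bounded_above_continuous d_gt0 _ f_le_M).
by move=> u v Du Dv; apply: f_midconvex; apply: ball_sub.
Qed.
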